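(* Let $\gamma<1$, $\gamma\neq 0$. The following two conditions are equivalent. (A) For all $\gamma'\in(\gamma,1)$, $$\lim_{x\uparrow\infty}\frac{u_0'(x)}{x^{\gamma'-1}}=0,$$ and for all $\gamma''<\gamma$, $$\lim_{x\uparrow\infty}\frac{u_0'(x)}{x^{\gamma''-1}}=\infty.$$ (B) The measure $\mu$ has finite support with right boundary at $\frac{1}{1-\gamma}$, i.e. $$\inf\{y>0:\mu((y,\infty))=0\}=\frac{1}{1-\gamma}.$$
   Context: Let $\mu$ be a nonzero finite positive Borel measure on $(0,\infty)$ such that $\int y e^{yz}\mu(dy)<\infty$ for every $z\in\mathbb{R}$. Define $h(z,t):=\int e^{yz-\frac12 y^2 t}\mu(dy)$ for $(z,t)\in\mathbb{R}\times[0,\infty)$. For each $t$, the map $z\mapsto h(z,t)$ is strictly increasing with range $(0,\infty)$. Let $u:(0,\infty)\times[0,\infty)\to\mathbb{R}$ be smooth, strictly increasing and strictly concave in $x$, solving $u_t=\frac12 u_x^2/u_{xx}$, and related to $h$ by $u_x(h(z,t),t)=e^{-z+t/2}$ for all $(z,t)$. Write $u_0(x):=u(x,0)$. *)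

From HB Require Import structures.
From mathcomp Require Import all_boot all_order all_algebra.
From mathcomp Require Import all_classical all_reals all_analysis.
Set Implicit Arguments. Unset Strict Implicit. Unset Printing Implicit Defensive.
Import Order.TTheory GRing.Theory Num.Theory.
Import numFieldNormedType.Exports.
Local Open Scope classical_set_scope.
Local Open Scope ring_scope.

Definition hfun (R : realType) (mu : {measure set R -> \bar R})
  (z t : R) : R :=
  fine (\int[mu]_(y in `]0%R, +oo[%classic) (expR (y * z - y ^+ 2 * t / 2))%:E)%E.

Definition half_strip (R : realType) : set (R * R)%type :=
  [set p | 0 < p.1 /\ 0 <= p.2].

(* u : (x,t) |-> u x t is smooth (C^oo up to the boundary t = 0) on
   (0,oo) x [0,oo), with D i j its partial derivative d^i/dx^i d^j/dt^j:
   D 0 0 = u; each D i j is jointly continuous on the domain;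
   its x-derivative is D (i+1) j; its t-derivative is D i (j+1)
   (a one-sided right derivative at t = 0). *)
Definition smooth_family (R : realType) (u : R -> R -> R)
  (D : nat -> nat -> R -> R -> R) : Prop :=
  (forall x t, D 0%N 0%N x t = u x t) /\
  (forall i j : nat, {within (@half_strip R), continuous (fun p : R * R => D i j p.1 p.2)}) /\
  (forall (i j : nat) (x t : R), 0 < x -> 0 <= t ->
     is_derive x (1:R) (fun x' => D i j x' t) (D i.+1 j x t)) /\
  (forall (i j : nat) (x t : R), 0 < x -> 0 < t ->
     is_derive t (1:R) (fun t' => D i j x t') (D i j.+1 x t)) /\
  (forall (i j : nat) (x : R), 0 < x ->
     (fun s => (D i j x s - D i j x 0) / s) s @[s --> 0^'+] --> D i j.+1 x 0).

(* Write v := u_0' and H z := h(z, 0) = \int e^(y z) mu(dy) ([mgf mu z]).  Concavity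
   of u_0 makes v nonincreasing, and v (H z) = e^(-z).  If mu vanishes beyond y then
   H z <= mu(R) e^(y z), while always H z >= mu(]y, oo[) e^(y z); evaluating the
   monotone v at x = H z gives v x <= C x^(-1/y) in the first case and
   v x >= c x^(-1/y) for large x in the second.  Hence v x / x^(g-1) tends to 0 as soon
   as g > 1 - 1/y for some y beyond the support of mu, and to +oo as soon as
   g < 1 - 1/y for some y below its right end y*: the critical exponent 1 - 1/y* is
   gamma exactly when y* = 1/(1 - gamma). *)

From HB Require Import structures.
From mathcomp Require Import all_boot all_order all_algebra.
From mathcomp Require Import all_classical all_reals all_analysis.
From mathcomp Require Import ring lra measurable_realfun.
Import Order.TTheory GRing.Theory Num.Theory.
Import numFieldNormedType.Exports.
Local Open Scope classical_set_scope.
Local Open Scope ring_scope.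

Section powR_pinfty.
Context {R : realType}.

Lemma gt0_powRB (x r s : R) : 0 < x -> x `^ (r - s) = x `^ r / x `^ s.
Proof. by move=> x_gt0; rewrite powRB //; apply/implyP => _; exact: lt0r_neq0. Qed.

Lemma powR_cvgy (k : R) : 0 < k -> x `^ k @[x --> +oo] --> +oo.
Proof.
move=> k_gt0; apply/cvgryPge => A.
set B := Num.max A 1.
have B_gt0 : 0 < B by rewrite lt_max ltr01 orbT.
have A_le_B : A <= B by rewrite le_max lexx.
near=> x.
have x_ge : B `^ k^-1 <= x by near: x; apply: nbhs_pinfty_ge; exact: num_real.
rewrite (le_trans A_le_B) // -{1}(powRr1 (ltW B_gt0)).
rewrite -(mulVf (lt0r_neq0 k_gt0)) powRrM.
by apply: ge0_ler_powR; rewrite ?nnegrE ?powR_ge0 // ltW.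
Unshelve. all: by end_near.
Qed.

Lemma powR_cvgy0 (k : R) : k < 0 -> x `^ k @[x --> +oo] --> 0.
Proof.
move=> k_lt0.
have -> : (fun x => x `^ k) = (fun x => (x `^ (- k))^-1).
  by apply/funext => x /=; rewrite -powRN opprK.
apply/(@gtr0_cvgV0 _ _ _ _ (fun x => x `^ (- k))); last by apply: powR_cvgy; rewrite oppr_gt0.
by near=> x; apply: powR_gt0; near: x; apply: nbhs_pinfty_gt; exact: num_real.
Unshelve. all: by end_near.
Qed.

End powR_pinfty.

Lemma cvg0_cvgy_false {R : realFieldType} {T : Type} {F : set_system T}
    {PF : ProperFilter F} {f : T -> R} :
  f @ F --> 0 -> f @ F --> +oo -> False.
Proof.
move=> /cvgr0Pnorm_lt/(_ 1 ltr01) f_small /cvgryPge/(_ 1) f_big.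
have [x [/= fx_lt1 fx_ge1]] := filter_ex (filterI f_small f_big).
by have := ler_norm (f x); lra.
Qed.

Lemma is_derive_quotient {R : realType} {f : R -> R} {a d : R} :
  is_derive a 1 f d -> (fun h => h^-1 * (f (h + a) - f a)) @ 0^' --> d.
Proof.
move=> fd; have := @ex_derive _ _ _ a 1 f d fd.
rewrite /derivable -/(derive f a 1) (@derive_val _ _ _ a 1 f d fd).
suff -> : (fun h => h^-1 * (f (h + a) - f a)) =
  (fun h : R => h^-1 *: ((f \o shift a) (h *: 1) - f a)) by [].
by apply/funext => h; rewrite /= [h *: 1]mulr1.
Qed.

Section inverse_comparisons.
Context {R : realFieldType}.
Variables (y g : R).
Hypotheses (y_gt0 : 0 < y) (g_lt1 : g < 1).

Lemma lt_inv_1B : (y < (1 - g)^-1) = (1 - y^-1 < g).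
Proof.
rewrite -ltf_pV2 ?posrE ?invr_gt0 ?subr_gt0 // invrK.
by apply/idP/idP => ?; lra.
Qed.

Lemma gt_inv_1B : ((1 - g)^-1 < y) = (g < 1 - y^-1).
Proof.
rewrite -ltf_pV2 ?posrE ?invr_gt0 ?subr_gt0 // invrK.
by apply/idP/idP => ?; lra.
Qed.

End inverse_comparisons.

Section concave_derivative.
Context {R : realType}.
Variables (f : R -> R) (x y : R).
Hypothesis xy : x < y.
Hypothesis f_concave : forall t, 0 < t < 1 ->
  t * f x + (1 - t) * f y <= f (t * x + (1 - t) * y).

Let s := (f y - f x) / (y - x).

Lemma concave_chord_le w : x < w < y -> s * (w - x) <= f w - f x.
Proof.
move=> /andP[xw wy].
pose t := (y - w) / (y - x).
have yx_neq0 : y - x != 0 by rewrite subr_eq0 gt_eqF.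
have -> : w = t * x + (1 - t) * y by rewrite /t; field.
rewrite lerBrDl; have -> : f x + s * (t * x + (1 - t) * y - x) = t * f x + (1 - t) * f y.
  by rewrite /s /t; field.
apply: f_concave; rewrite /t divr_gt0 ?ltr_pdivrMr /=; lra.
Qed.

Lemma concave_derive_le dx dy :
  is_derive x 1 f dx -> is_derive y 1 f dy -> dy <= dx.
Proof.
move=> fdx fdy.
have sE : s * (y - x) = f y - f x by rewrite /s divfK // subr_eq0 gt_eqF.
apply: (@le_trans _ _ s).
  apply: (cvgr_to_le (cvg_dnbhs_at_left (is_derive_quotient fdy))).
  near=> h.
  have h_lt0 : h < 0 by near: h; exact: nbhs_left_lt.
  have h_gt : x - y < h by near: h; apply: nbhs_left_gt; rewrite subr_lt0.
  rewrite mulrC ler_ndivrMr //.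
  have := concave_chord_le (h + y) ltac:(lra).
  by rewrite -addrA mulrDr sE; lra.
apply: (cvgr_to_ge (cvg_dnbhs_at_right (is_derive_quotient fdx))).
near=> h.
have h_gt0 : 0 < h by near: h; exact: nbhs_right_gt.
have h_lt : h < y - x by near: h; apply: nbhs_right_lt; rewrite subr_gt0.
rewrite mulrC ler_pdivlMr //.
by have := concave_chord_le (h + x) ltac:(lra); rewrite addrK.
Unshelve. all: by end_near.
Qed.

End concave_derivative.

Definition mgf {R : realType} (mu : {measure set R -> \bar R}) (z : R) : \bar R :=
  (\int[mu]_(y in `]0%R, +oo[%classic) (expR (y * z))%:E)%E.

Section mgf.
Context {R : realType}.
Variable mu : {measure set R -> \bar R}.

Lemma hfun0 z : hfun mu z 0 = fine (mgf mu z).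
Proof.
rewrite /hfun /mgf; congr fine; apply: eq_integral => y _.
by rewrite mulr0 mul0r subr0.
Qed.

Lemma measurable_expRMr (z : R) (D : set R) :
  measurable_fun D (fun y : R => (expR (y * z))%:E).
Proof.
apply/measurable_EFinP; apply: measurableT_comp; first exact: measurable_expR.
exact: mulrr_measurable.
Qed.

Lemma mgf_ge0 z : (0 <= mgf mu z)%E.
Proof. by apply: integral_ge0 => y _; rewrite lee_fin expR_ge0. Qed.

Lemma mgf_le_null_tail y z : 0 <= z -> mu `]y, +oo[%classic = 0%E ->
  (mgf mu z <= (expR (y * z))%:E * mu setT)%E.
Proof.
move=> z_ge0 tail0.
apply: (@le_trans _ _ (\int[mu]_(x in `]0%R, +oo[%classic) (expR (y * z))%:E)%E).
  apply: ae_ge0_le_integral => //.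
  - exact: measurable_expRMr.
  - exists `]y, +oo[%classic; split => // x x_out.
    rewrite /= in_itv /= andbT ltNge; apply/negP => xy.
    by apply: x_out => _; rewrite lee_fin ler_expR ler_wpM2r.
rewrite integral_cst //; apply: lee_wpmul2l; first by rewrite lee_fin expR_ge0.
by apply: le_measure; rewrite ?inE.
Qed.

Lemma mgf_ge_tail y z : 0 <= y -> 0 <= z ->
  ((expR (y * z))%:E * mu `]y, +oo[%classic <= mgf mu z)%E.
Proof.
move=> y_ge0 z_ge0; rewrite -integral_cst //.
apply: (@le_trans _ _ (\int[mu]_(x in `]y, +oo[%classic) (expR (x * z))%:E)%E).
  apply: ge0_le_integral => //.
  - by move=> x _; rewrite lee_fin expR_ge0.
  - exact: measurable_expRMr.
  - move=> x /=; rewrite in_itv /= andbT => yx.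
    by rewrite lee_fin ler_expR ler_wpM2r // ltW.
apply: ge0_subset_integral => //; first exact: measurable_expRMr.
by move=> x /=; rewrite !in_itv /= !andbT => /(le_lt_trans y_ge0).
Qed.

Lemma mgf_fin_num z : 0 <= z -> (mu setT < +oo)%E ->
  mu.-integrable `]0%R, +oo[%classic (fun y => (y * expR (y * z))%:E) ->
  mgf mu z \is a fin_num.
Proof.
move=> z_ge0 mu_fin mu_int.
apply: integrable_fin_num => //.
apply: (@le_integrable _ _ _ mu _ _ _
  (fun y => (expR z)%:E + (y * expR (y * z))%:E)%E) => //.
- exact: measurable_expRMr.
- move=> x /=; rewrite in_itv /= andbT => x_gt0.
  have yexp_ge0 : 0 <= x * expR (x * z) by rewrite mulr_ge0 ?expR_ge0 // ltW.
  rewrite lee_fin !ger0_norm ?addr_ge0 ?expR_ge0 //.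
  have [x_le1|x_gt1] := leP x 1.
    by rewrite ler_wpDr // ler_expR ler_piMl.
  by rewrite ler_wpDl ?expR_ge0 // ler_peMl // ltW.
apply: integrableD => //; apply/integrableP; split; first exact: measurable_cst.
rewrite integral_cst //; apply: lte_mul_pinfty => //.
by apply: le_lt_trans mu_fin; apply: le_measure; rewrite ?inE.
Qed.

Lemma measureT_itv_gt0 : mu `]-oo, 0%R]%classic = 0%E ->
  mu setT = mu `]0%R, +oo[%classic.
Proof.
move=> nonpos0.
have -> : setT = `]0%R, +oo[%classic `|` `]-oo, 0%R]%classic :> set R.
  apply/seteqP; split => x // _ /=; rewrite !in_itv /= andbT.
  by case: (leP x 0) => _; [right|left].
by rewrite measureU0.
Qed.

Lemma exists_tail_neq0 : mu `]0%R, +oo[%classic <> 0%E ->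
  exists2 y : R, 0 < y & mu `]y, +oo[%classic <> 0%E.
Proof.
move=> pos_neq0; apply/not_exists2P => tails0; apply: pos_neq0.
have tail0 n : mu `]n.+1%:R^-1, +oo[%classic = 0%E.
  by case: (tails0 n.+1%:R^-1) => [|/contrapT//]; rewrite invr_gt0 ltr0Sn.
apply/negligibleP => //.
apply: (@negligibleS _ _ _ mu (\bigcup_n `]n.+1%:R^-1, +oo[%classic)).
  move=> x /=; rewrite in_itv /= andbT => x_gt0.
  have [n] := ltr_add_invr x_gt0; rewrite add0r => nx.
  by exists n => //=; rewrite in_itv /= nx.
by apply: negligible_bigcup => n; apply/negligibleP; last exact: tail0.
Qed.

End mgf.

Lemma exists_expR_exponent {R : realType} {y M x : R} :
  0 < y -> 0 < M -> M <= x ->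
  exists2 z, 0 <= z & expR (y * z) * M = x /\ expR (- z) = M `^ y^-1 * x `^ (- y^-1).
Proof.
move=> y_gt0 M_gt0 Mx; have x_gt0 := lt_le_trans M_gt0 Mx.
exists (y^-1 * ln (x / M)).
  apply: mulr_ge0; first by rewrite invr_ge0 ltW.
  by apply: ln_ge0; rewrite ler_pdivlMr // mul1r.
split; first by rewrite mulrA mulfV ?gt_eqF // mul1r lnK ?posrE ?divr_gt0 // divfK ?gt_eqF.
rewrite /powR !gt_eqF // -expRD; congr expR.
rewrite lnM ?posrE ?invr_gt0 // lnV ?posrE //; ring.
Qed.

Section derivative_decay.
Context {R : realType}.
Variable mu : {measure set R -> \bar R}.
Hypothesis mu_fin : (mu setT < +oo)%E.
Hypothesis mu_pos : mu `]0%R, +oo[%classic <> 0%E.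
Hypothesis mu_int : forall z : R,
  mu.-integrable `]0%R, +oo[%classic (fun y => (y * expR (y * z))%:E).
Variable v : R -> R.
Hypothesis v_nonincr : forall x y, 0 < x -> x <= y -> v y <= v x.
Hypothesis v_mgf : forall z, 0 <= z -> v (fine (mgf mu z)) = expR (- z).

Lemma measure_fin_num A : measurable A -> mu A \is a fin_num.
Proof.
move=> mA; rewrite ge0_fin_numE ?measure_ge0 //.
by apply: le_lt_trans mu_fin; apply: le_measure; rewrite ?inE.
Qed.

Lemma fine_measure_gt0 A : measurable A -> mu A <> 0%E -> 0 < fine (mu A).
Proof.
move=> mA A_neq0; apply: fine_gt0; rewrite -ge0_fin_numE ?measure_ge0 //.
by rewrite measure_fin_num // andbT lt0e measure_ge0 andbT; apply/eqP.
Qed.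

Lemma mgf_gt0 z : 0 <= z -> (0 < mgf mu z)%E.
Proof.
move=> z_ge0; apply: (lt_le_trans _ (mgf_ge_tail mu _ _ (lexx 0) z_ge0)).
by rewrite mul0r expR0 mul1e lt0e measure_ge0 andbT; apply/eqP.
Qed.

Lemma v_le_null_tail y x : 0 < y -> mu `]y, +oo[%classic = 0%E ->
  fine (mu setT) <= x -> v x <= fine (mu setT) `^ y^-1 * x `^ (- y^-1).
Proof.
move=> y_gt0 tail0 Mx.
have M_gt0 : 0 < fine (mu setT).
  apply: fine_measure_gt0 => // T0; apply: mu_pos; apply/eqP.
  by rewrite eq_le measure_ge0 andbT -T0 le_measure ?inE.
have [z z_ge0 [zM <-]] := exists_expR_exponent y_gt0 M_gt0 Mx.
have mgf_le : (mgf mu z <= x%:E)%E.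
  by rewrite -zM EFinM fineK ?measure_fin_num //; exact: mgf_le_null_tail.
have mgf_fin : mgf mu z \is a fin_num.
  by rewrite ge0_fin_numE ?mgf_ge0 // (le_lt_trans mgf_le) ?ltry.
rewrite -v_mgf //; apply: v_nonincr; last by rewrite -lee_fin fineK.
by apply: fine_gt0; rewrite mgf_gt0 // (le_lt_trans mgf_le) ?ltry.
Qed.

Lemma v_ge_tail y x : 0 < y -> mu `]y, +oo[%classic <> 0%E ->
  fine (mu `]y, +oo[%classic) <= x ->
  fine (mu `]y, +oo[%classic) `^ y^-1 * x `^ (- y^-1) <= v x.
Proof.
move=> y_gt0 tail_neq0 Mx.
have M_gt0 := fine_measure_gt0 _ (measurable_itv _) tail_neq0.
have [z z_ge0 [zM <-]] := exists_expR_exponent y_gt0 M_gt0 Mx.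
rewrite -v_mgf //; apply: v_nonincr; first exact: lt_le_trans M_gt0 Mx.
rewrite -lee_fin fineK ?mgf_fin_num // -zM EFinM fineK ?measure_fin_num //.
exact: mgf_ge_tail _ _ _ (ltW y_gt0) z_ge0.
Qed.

Lemma v_gt0_near : \forall x \near +oo, 0 < v x.
Proof.
have [y y_gt0 tail_neq0] := exists_tail_neq0 mu mu_pos.
have M_gt0 := fine_measure_gt0 _ (measurable_itv _) tail_neq0.
near=> x.
have Mx : fine (mu `]y, +oo[%classic) <= x.
  by near: x; apply: nbhs_pinfty_ge; exact: num_real.
apply: (lt_le_trans _ (v_ge_tail _ _ y_gt0 tail_neq0 Mx)).
by rewrite mulr_gt0 ?powR_gt0 // (lt_le_trans M_gt0 Mx).
Unshelve. all: by end_near.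
Qed.

Lemma v_ratio_cvg0 y g : 0 < y -> mu `]y, +oo[%classic = 0%E -> 1 - y^-1 < g ->
  (fun x => v x / x `^ (g - 1)) x @[x --> +oo] --> 0.
Proof.
move=> y_gt0 tail0 gy.
set C := fine (mu setT) `^ y^-1.
have bound_cvg0 : C * x `^ (- y^-1 - (g - 1)) @[x --> +oo] --> 0.
  by rewrite -(mulr0 C); apply: cvgM; [exact: cvg_cst | apply: powR_cvgy0; lra].
apply: (squeeze_cvgr _ (cvg_cst 0) bound_cvg0).
near=> x.
have x_gt0 : 0 < x by near: x; apply: nbhs_pinfty_gt; exact: num_real.
have Mx : fine (mu setT) <= x by near: x; apply: nbhs_pinfty_ge; exact: num_real.
have vx_gt0 : 0 < v x by near: x; exact: v_gt0_near.
rewrite divr_ge0 ?powR_ge0 ?(ltW vx_gt0) //= (gt0_powRB _ (- y^-1)) // mulrA.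
by rewrite ler_pM2r ?invr_gt0 ?powR_gt0 // v_le_null_tail.
Unshelve. all: by end_near.
Qed.

Lemma v_ratio_cvgy y g : 0 < y -> mu `]y, +oo[%classic <> 0%E -> g < 1 - y^-1 ->
  (fun x => v x / x `^ (g - 1)) x @[x --> +oo] --> +oo.
Proof.
move=> y_gt0 tail_neq0 gy.
have M_gt0 := fine_measure_gt0 _ (measurable_itv _) tail_neq0.
have c_gt0 : 0 < fine (mu `]y, +oo[%classic) `^ y^-1 by rewrite powR_gt0.
have k_gt0 : 0 < - y^-1 - (g - 1) by lra.
apply: (ger_cvgy _ (gt0_cvgMry c_gt0 (powR_cvgy _ k_gt0))).
near=> x.
have x_gt0 : 0 < x by near: x; apply: nbhs_pinfty_gt; exact: num_real.
have Mx : fine (mu `]y, +oo[%classic) <= x.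
  by near: x; apply: nbhs_pinfty_ge; exact: num_real.
rewrite (gt0_powRB _ (- y^-1)) // mulrA ler_pM2r ?invr_gt0 ?powR_gt0 //.
exact: v_ge_tail.
Unshelve. all: by end_near.
Qed.

Lemma v_ratio_iff_tail_bound gamma : gamma < 1 ->
  ((forall g', gamma < g' -> g' < 1 ->
      (fun x => v x / x `^ (g' - 1)) x @[x --> +oo] --> 0) /\
   (forall g'', g'' < gamma ->
      (fun x => v x / x `^ (g'' - 1)) x @[x --> +oo] --> +oo))
  <->
  ereal_inf [set (y%:E : \bar R) | y in [set y : R | 0 < y /\ mu `]y, +oo[%classic = 0%E]]
    = ((1 - gamma)^-1)%:E.
Proof.
move=> gamma_lt1.
set S := [set _%:E | y in _]; set c := (1 - gamma)^-1.
have c_gt0 : 0 < c by rewrite invr_gt0 subr_gt0.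
have cVE : c^-1 = 1 - gamma by rewrite invrK.
have tail_neq0_lt_inf y : 0 < y -> (y%:E < ereal_inf S)%E -> mu `]y, +oo[%classic <> 0%E.
  move=> y_gt0 y_lt tail0; have : S y%:E by exists y.
  by move=> /ereal_inf_lbound; rewrite leNgt y_lt.
split=> [[small big]|infE].
  apply/eqP; rewrite eq_le; apply/andP; split.
    apply/lee_addgt0Pr => e e_gt0; rewrite -EFinD; apply: ereal_inf_lbound.
    exists (c + e) => //; split; first lra.
    apply: contrapT => tail_neq0.
    have yV_gt0 : 0 < (c + e)^-1 by rewrite invr_gt0 addr_gt0.
    have : gamma < 1 - (c + e)^-1 by rewrite -gt_inv_1B ?addr_gt0 // ltrDl.
    pose g := (gamma + (1 - (c + e)^-1)) / 2.
    by move=> gamma_lt; apply: (cvg0_cvgy_false (small g _ _)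
      (v_ratio_cvgy _ g _ tail_neq0 _)); rewrite /g ?addr_gt0 //; lra.
  apply/ereal_infP => _ [y [y_gt0 tail0] <-]; rewrite lee_fin leNgt; apply/negP.
  rewrite lt_inv_1B // => gamma_gt.
  pose g := (1 - y^-1 + gamma) / 2.
  by apply: (cvg0_cvgy_false (v_ratio_cvg0 _ g y_gt0 tail0 _) (big g _)); rewrite /g; lra.
split=> [g gamma_g g_lt1 | g g_gamma].
  have : (ereal_inf S < ((1 - g)^-1)%:E)%E by rewrite infE lte_fin lt_inv_1B // cVE; lra.
  move=> /ereal_inf_lt[_ [y [y_gt0 tail0] <-]]; rewrite lte_fin lt_inv_1B // => gy.
  exact: v_ratio_cvg0 y_gt0 tail0 gy.
have g_lt1 : g < 1 by lra.
have lt_c : (1 - g)^-1 < c by rewrite gt_inv_1B // cVE; lra.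
have inv_gt0 : 0 < (1 - g)^-1 by rewrite invr_gt0 subr_gt0.
pose y := ((1 - g)^-1 + c) / 2.
have y_gt0 : 0 < y by rewrite /y; lra.
apply: (v_ratio_cvgy _ _ y_gt0).
  by apply: tail_neq0_lt_inf => //; rewrite infE lte_fin /y; lra.
by rewrite -gt_inv_1B // /y; lra.
Qed.

End derivative_decay.

Theorem lemma6 (R : realType)
  (mu : {measure set R -> \bar R})
  (mu_fin : (mu setT < +oo)%E)
  (mu_nz : mu setT <> 0%E)
  (mu_supp : mu `]-oo, 0%R]%classic = 0%E)
  (mu_int : forall z : R,
     mu.-integrable `]0%R, +oo[%classic (fun y => (y * expR (y * z))%:E))
  (u : R -> R -> R) (D : nat -> nat -> R -> R -> R)
  (u_smooth : smooth_family u D)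
  (u_incr : forall t x y, 0 <= t -> 0 < x -> x < y -> u x t < u y t)
  (u_conc : forall t x y l, 0 <= t -> 0 < x -> 0 < y -> x != y ->
     0 < l -> l < 1 ->
     l * u x t + (1 - l) * u y t < u (l * x + (1 - l) * y) t)
  (u_pde : forall x t, 0 < x -> 0 <= t ->
     D 0%N 1%N x t = 2^-1 * (D 1%N 0%N x t) ^+ 2 / D 2%N 0%N x t)
  (u_h : forall z t, 0 <= t -> D 1%N 0%N (hfun mu z t) t = expR (- z + t / 2))
  (gamma : R) (gamma_lt1 : gamma < 1) (gamma_nz : gamma != 0) :
  ((forall g', gamma < g' -> g' < 1 ->
      (fun x => D 1%N 0%N x 0 / x `^ (g' - 1)) x @[x --> +oo] --> 0) /\
   (forall g'', g'' < gamma ->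
      (fun x => D 1%N 0%N x 0 / x `^ (g'' - 1)) x @[x --> +oo] --> +oo))
  <->
  ereal_inf [set (y%:E : \bar R) | y in [set y : R | 0 < y /\ mu `]y, +oo[%classic = 0%E]]
    = ((1 - gamma)^-1)%:E.
Proof.
have [u_D00 [_ [u_Dx _]]] := u_smooth.
have mu_pos : mu `]0%R, +oo[%classic <> 0%E by rewrite -measureT_itv_gt0.
have D00E : (fun x => D 0%N 0%N x 0) = (fun x => u x 0).
  by apply/funext => x; exact: u_D00.
have v_nonincr x y : 0 < x -> x <= y -> D 1%N 0%N y 0 <= D 1%N 0%N x 0.
  move=> x_gt0; rewrite le_eqVlt => /predU1P[-> // | xy].
  apply: (@concave_derive_le _ (fun x => u x 0) x y xy).
  - by move=> t /andP[t_gt0 t_lt1]; apply/ltW/u_conc; rewrite ?lt_eqF //; lra.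
  - by rewrite -D00E; exact: u_Dx.
  - by rewrite -D00E; apply: u_Dx; lra.
have v_mgf z : 0 <= z -> D 1%N 0%N (fine (mgf mu z)) 0 = expR (- z).
  by move=> _; rewrite -hfun0 u_h // mul0r addr0.
exact: v_ratio_iff_tail_bound mu_fin mu_pos mu_int _ v_nonincr v_mgf _ gamma_lt1.
Qed.
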